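(* Let $\mathcal{M}$ be a $k\times\ell$ gridding matrix whose cell graph $G_\mathcal{M}$ is disconnected. Choose a connected component of $G_\mathcal{M}$, let $\mathcal{M}_1$ be the submatrix of $\mathcal{M}$ formed by the rows and columns containing vertices of this component, and $\mathcal{M}_2$ the submatrix formed by the remaining rows and columns. For an $\mathcal{M}$-gridded permutation $\pi$, let $\pi_1$ and $\pi_2$ be the subpermutations of $\pi$ formed by the points lying in the cells of $\mathcal{M}_1$ and of $\mathcal{M}_2$, respectively. Then $\mathrm{gw}(\pi)\le\max(\mathrm{gw}(\pi_1),\mathrm{gw}(\pi_2))+\max(k,\ell)$.
   Context: Permutations of length $n$ are identified with their diagrams $\{(i,\pi_i)\}$. A $k\times\ell$ gridding matrix $\mathcal{M}$ has permutation classes as entries. An $\mathcal{M}$-gridding of $\pi$ of length $n$ consists of possibly empty disjoint integer intervals $I_1<\dots<I_k$, $J_1<\dots<J_\ell$, each family with union $[n]$, such that the points in each cell $I_i\times J_j$ form a pattern in $\mathcal{M}_{i,j}$; an $\mathcal{M}$-gridded permutation is a permutation with a fixed $\mathcal{M}$-gridding. The cell graph $G_\mathcal{M}$ has as vertices the cells with infinite entries, adjacent when they share a row or column and all cells strictly between them are finite or empty; assume all entries of $\mathcal{M}$ are infinite or empty. Intervalicity of $A\subseteq[n]$ is the least number of disjoint integer intervals with union $A$; grid-complexity of a point set is the maximum of the intervalicities of its two axis projections. A grid tree of $\pi$ is a rooted binary tree with leaves labeled bijectively by points of $\pi$; its grid-width is the maximum over vertices $v$ of the grid-complexity of the leaf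 labels below $v$; $\mathrm{gw}(\pi)$ is the minimum grid-width over grid trees of $\pi$ (for a subpermutation, computed on its standardization, equivalently on its point set). *)

From mathcomp Require Import all_boot all_fingroup.
From Stdlib Require Import ClassicalEpsilon Relations.
Set Implicit Arguments. Unset Strict Implicit. Unset Printing Implicit Defensive.

Definition toBool (P : Prop) : bool :=
  if excluded_middle_informative P then true else false.

Definition is_perm (s : seq nat) : Prop := perm_eq s (iota 0 (size s)).

(* Standardization (order-isomorphic rearrangement onto 0..size s - 1). *)
Definition std (s : seq nat) : seq nat :=
  map (fun y => count (fun z => z < y) s) s.

Definition contains (s t : seq nat) : Prop :=
  exists m : bitseq, std (mask m s) = t.

Definition perm_class (C : seq nat -> Prop) : Prop :=
  (forall s, C s -> is_perm s) /\ (forall s t, C s -> contains s t -> C t).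

Definition infinite_class (C : seq nat -> Prop) : Prop :=
  forall m, exists s, C s /\ m <= size s.

Definition empty_class (C : seq nat -> Prop) : Prop := forall s, ~ C s.

(* A gridding matrix with k columns and l rows: cell (i,j) = I_i x J_j. *)
Definition gmatrix (k l : nat) := 'I_k -> 'I_l -> (seq nat -> Prop).

(* Interval boundaries: I_i = [b i, b (i+1)) (0-based coordinates), possibly
   empty, consecutive, with union [0, n). *)
Definition bounds (k n : nat) (b : nat -> nat) : Prop :=
  b 0 = 0 /\ b k = n /\ (forall i, i < k -> b i <= b i.+1).

Definition in_int (b : nat -> nat) (i x : nat) : bool := (b i <= x) && (x < b i.+1).

Definition in_cell n (sigma : 'S_n) (cb rb : nat -> nat) (x : 'I_n) (i j : nat) : bool :=
  in_int cb i x && in_int rb j (sigma x).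

Definition is_gridding k l n (M : gmatrix k l) (sigma : 'S_n) (cb rb : nat -> nat) : Prop :=
  bounds k n cb /\ bounds l n rb /\
  forall (i : 'I_k) (j : 'I_l),
    let s := [seq val (sigma x) | x <- enum 'I_n & in_cell sigma cb rb x i j] in
    s != [::] -> M i j (std s).

Definition cell k l := ('I_k * 'I_l)%type.

Definition is_vertex k l (M : gmatrix k l) (c : cell k l) : Prop := infinite_class (M c.1 c.2).

Definition cell_adj k l (M : gmatrix k l) (a b : cell k l) : Prop :=
  is_vertex M a /\ is_vertex M b /\ a <> b /\
  ( (a.1 = b.1 /\ forall j : 'I_l,
        minn a.2 b.2 < j < maxn a.2 b.2 -> ~ infinite_class (M a.1 j))
  \/ (a.2 = b.2 /\ forall i : 'I_k,
        minn a.1 b.1 < i < maxn a.1 b.1 -> ~ infinite_class (M i a.2)) ).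

Definition cell_connected k l (M : gmatrix k l) : relation (cell k l) :=
  clos_refl_trans (cell k l) (cell_adj M).

Definition point := (nat * nat)%type.

(* Intervalicity of A inside the universe U (a finite set of integers): the
   number of maximal runs of elements of A in the sorted list of U.  For
   U = [n] this is the least number of integer intervals with union A; for U
   the coordinates of a point set this is the intervalicity in its
   standardization. *)
Definition intervalicity (A U : seq nat) : nat :=
  let us := sort leq (undup U) in
  count (fun i => (nth 0 us i \in A) && ((i == 0) || (nth 0 us i.-1 \notin A)))
        (iota 0 (size us)).

Definition grid_complexity (P A : seq point) : nat :=
  maxn (intervalicity (map fst A) (map fst P)) (intervalicity (map snd A) (map snd P)).

Inductive gtree := Leaf of point | Node of gtree & gtree.

Fixpoint leaves (t : gtree) : seq point :=
  match t with Leaf p => [:: p] | Node a b => leaves a ++ leaves b end.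

Fixpoint grid_width (P : seq point) (t : gtree) : nat :=
  match t with
  | Leaf p => grid_complexity P [:: p]
  | Node a b => maxn (grid_complexity P (leaves t))
                     (maxn (grid_width P a) (grid_width P b))
  end.

Definition grid_tree_of (P : seq point) (t : gtree) : Prop := perm_eq (leaves t) P.

Definition gw_le (P : seq point) (w : nat) : Prop :=
  P = [::] \/ exists t, grid_tree_of P t /\ grid_width P t <= w.

(* gw(P) = least grid-width of a grid tree of P.  Every grid tree has
   grid-width <= size P (intervalicity of A <= |A|), so the minimum over
   w <= size P is the true minimum. *)
Definition gw (P : seq point) : nat :=
  \big[minn/size P]_(w < (size P).+1 | toBool (gw_le P w)) w.

Definition sub_points n (sigma : 'S_n) (Q : 'I_n -> Prop) : seq point :=
  [seq (val x, val (sigma x)) | x <- enum 'I_n & toBool (Q x)].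

From Stdlib Require Import Relations Classical ClassicalEpsilon.
From mathcomp Require Import all_boot all_fingroup.
From mathcomp Require Import zify.
Set Implicit Arguments. Unset Strict Implicit. Unset Printing Implicit Defensive.

(* Take optimal grid trees of pi1 and pi2 and join them under a new root.
   The root sees all of pi, hence has grid-complexity 1.  A vertex inside the
   tree of pi1 has, measured in pi, grid-complexity at most its complexity in
   pi1 plus the grid-complexity of pi1 inside pi (triangle inequality for
   intervalicity), and likewise for pi2.  Finally, every point of pi lies in
   a vertex cell, and a vertex lies in a column of the component iff it lies
   in a row of it; so pi1 is the set of points in the columns of the
   component and also the set of points in its rows, and pi2 is its
   complement.  Membership in pi1 or pi2 is thus constant on every column and
   every row, so both have intervalicity at most k horizontally and at most l
   vertically inside pi.  *)

(* [runs p b s] is the number of maximal blocks of consecutive elements of s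
   satisfying p, where b tells whether the element just before s satisfied p.
   Intervalicity is the number of such blocks in the sorted universe. *)
Fixpoint runs (p : pred nat) (b : bool) (s : seq nat) : nat :=
  if s is x :: s' then (p x && ~~ b) + runs p (p x) s' else 0.

Lemma count_block_starts p b s :
  count (fun i => p (nth 0 s i) && (if i == 0 then ~~ b else ~~ p (nth 0 s i.-1)))
        (iota 0 (size s)) = runs p b s.
Proof.
elim: s b => [|x s IH] b //=.
by rewrite (iotaDl 1 0) count_map -IH; congr addn; apply: eq_count => -[].
Qed.

Lemma intervalicity_runs A U :
  intervalicity A U = runs (fun v => v \in A) false (sort leq (undup U)).
Proof. by rewrite /intervalicity -count_block_starts; apply: eq_count => -[]. Qed.

(* Each element starts at most one block. *)
Lemma runs_size p b s : runs p b s <= size s.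
Proof.
elim: s b => [|x s IH] b //=.
by have := IH (p x); case: (p x) b => [] [] /=; lia.
Qed.

Lemma intervalicity_size A U : intervalicity A U <= size U.
Proof.
rewrite intervalicity_runs; apply: leq_trans (runs_size _ _ _) _.
by rewrite size_sort size_undup.
Qed.

Lemma intervalicity_full A U : {subset U <= A} -> intervalicity A U <= 1.
Proof.
move=> UA; rewrite intervalicity_runs.
have : all (fun v => v \in A) (sort leq (undup U)).
  by apply/allP => v; rewrite mem_sort mem_undup => /UA.
case: (sort leq (undup U)) => [|x s] //= /andP[-> As].
suff -> : runs (fun v => v \in A) true s = 0 by [].
by elim: s As => [|y s IH] //= /andP[-> /IH].
Qed.

(* The flags a, a', b record whether the previous element of s was in A, of
   [filter B s] was in A, and of s was in B. *)
Lemma runs_filter (A B : pred nat) s a a' b :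
  {in s, forall x, A x -> B x} ->
  (a ==> a' && b) -> (b ==> (a == a')) ->
  runs A a s <= runs A a' (filter B s) + runs B b s.
Proof.
elim: s a a' b => [|x s IH] a a' b //= AB.
have ABs : {in s, forall x, A x -> B x}.
  by move=> y ys; apply: AB; rewrite inE ys orbT.
have ABx := AB x (mem_head _ _).
case Bx: (B x); case Ax: (A x) => /=.
- have := IH true true true ABs isT isT.
  by case: a a' b => [] [] [] //=; lia.
- have := IH false false true ABs isT isT.
  by case: a a' b => [] [] [] //=; lia.
- by rewrite ABx in Bx.
- have := IH false a' false ABs isT isT.
  by case: a a' b => [] [] [] //=; lia.
Qed.

Lemma sort_undup_filter (U U1 : seq nat) : {subset U1 <= U} ->
  sort leq (undup U1) = filter (fun v => v \in U1) (sort leq (undup U)).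
Proof.
move=> U1U; apply: (sorted_eq leq_trans anti_leq).
- exact: (sort_sorted leq_total).
- exact: (sorted_filter leq_trans _ (sort_sorted leq_total _)).
apply: uniq_perm; rewrite ?filter_uniq ?sort_uniq ?undup_uniq // => v.
rewrite mem_filter !mem_sort !mem_undup.
by case U1v: (v \in U1) => //=; rewrite U1U.
Qed.

Lemma intervalicity_sub (A U1 U : seq nat) : {subset A <= U1} -> {subset U1 <= U} ->
  intervalicity A U <= intervalicity A U1 + intervalicity U1 U.
Proof.
move=> AU1 U1U; rewrite !intervalicity_runs (sort_undup_filter U1U).
by apply: runs_filter => // x _; apply: AU1.
Qed.

Lemma runs_blocks_from (B : pred nat) (f : nat -> nat) K x s :
  path leq (f x) (map f s) -> (forall v, v \in x :: s -> f v < K) ->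
  {in x :: s &, forall v w, f v = f w -> B v = B w} ->
  runs B (B x) s + f x < K.
Proof.
elim: s x => [|y s IH] x /=; first by move=> _ fK _; exact: fK x (mem_head _ _).
move=> /andP[fxy ps] fK fB.
have fB' : {in y :: s &, forall v w, f v = f w -> B v = B w}.
  by move=> v w vs ws; apply: fB; rewrite inE ?vs ?ws orbT.
have := IH y ps (fun v vs => fK v (@mem_behead _ (x :: y :: s) v vs)) fB'.
case: (eqVneq (f x) (f y)) => [fx_eq|fx_neq].
- have -> : B y = B x by apply: (fB y x); rewrite ?inE ?eqxx ?orbT ?fx_eq.
  by rewrite andbN add0n fx_eq.
- have : f x < f y by rewrite ltn_neqAle fx_neq.
  by case: (B y) (B x) => [] [] /=; lia.
Qed.

Lemma runs_blocks (B : pred nat) (f : nat -> nat) K s : sorted leq s ->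
  {homo f : x y / x <= y} -> (forall v, v \in s -> f v < K) ->
  {in s &, forall v w, f v = f w -> B v = B w} -> runs B false s <= K.
Proof.
case: s => [|x s] //= sorted_s f_mono fK fB.
have := runs_blocks_from (homo_sorted f_mono (x :: s) sorted_s) fK fB.
by case: (B x) => /=; lia.
Qed.

Lemma toBoolP (P : Prop) : toBool P = true <-> P.
Proof. by rewrite /toBool; case: excluded_middle_informative. Qed.

Lemma toBool_eq (P Q : Prop) : (P <-> Q) -> toBool P = toBool Q.
Proof.
rewrite /toBool => PQ.
by case: excluded_middle_informative => HP; case: excluded_middle_informative => HQ //;
  exfalso; tauto.
Qed.

Definition interval_index (b : nat -> nat) (k x : nat) : nat :=
  count (fun j => b j.+1 <= x) (iota 0 k).

Lemma bounds_mono k n b : bounds k n b -> forall j j', j <= j' -> j' <= k -> b j <= b j'.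
Proof.
move=> [_ [_ b_step]] j; elim=> [|j' IH]; first by rewrite leqn0 => /eqP ->.
rewrite leq_eqVlt => /orP[/eqP -> //|lt_jj' lt_j'k].
exact: leq_trans (IH lt_jj' (ltnW lt_j'k)) (b_step _ lt_j'k).
Qed.

Lemma count_lt_iota i k : i <= k -> count (fun j => j < i) (iota 0 k) = i.
Proof.
move=> le_ik; rewrite -(subnKC le_ik) iotaD count_cat add0n.
rewrite (eq_in_count (a2 := predT)); last by move=> j; rewrite mem_iota.
rewrite (eq_in_count (a1 := fun j => j < i) (a2 := pred0)); last first.
  by move=> j; rewrite mem_iota /= => /andP[le_ij _]; rewrite ltnNge le_ij.
by rewrite count_predT size_iota count_pred0 addn0.
Qed.

Lemma interval_index_spec k n b (i : 'I_k) x :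
  bounds k n b -> in_int b i x -> interval_index b k x = i.
Proof.
move=> bb /andP[lo hi]; rewrite /interval_index -[RHS](count_lt_iota (ltnW (ltn_ord i))).
apply: eq_in_count => j; rewrite mem_iota add0n /= => lt_jk.
case: (ltnP j i) => [lt_ji|le_ij].
- exact: leq_trans (bounds_mono bb lt_ji (ltnW (ltn_ord i))) lo.
- by apply/negbTE; rewrite -ltnNge (leq_trans hi) // (bounds_mono bb _ lt_jk).
Qed.

Lemma interval_exists k n b x : bounds k n b -> x < n -> exists i : 'I_k, in_int b i x.
Proof.
move=> bb lt_xn.
suff: forall m, m <= k -> x < b m -> exists i : 'I_k, in_int b i x.
  by case: bb => [_ [bk _]] /(_ k (leqnn k)); rewrite bk; apply.
elim=> [|m IH] le_mk; first by case: bb => [-> _].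
case: (ltnP x (b m)) => [lt_xbm _|le_bmx lt_xbm1]; first exact: IH (ltnW le_mk) lt_xbm.
by exists (Ordinal le_mk); rewrite /in_int le_bmx lt_xbm1.
Qed.

Lemma interval_unique k n b (i i' : 'I_k) x :
  bounds k n b -> in_int b i x -> in_int b i' x -> i' = i.
Proof.
move=> bb xi xi'; apply: val_inj.
by rewrite /= -(interval_index_spec bb xi) (interval_index_spec bb xi').
Qed.

Lemma interval_index_lt k n b x : bounds k n b -> x < n -> interval_index b k x < k.
Proof.
by move=> bb /(interval_exists bb)[i xi]; rewrite (interval_index_spec bb xi).
Qed.

Lemma interval_index_mono b k : {homo interval_index b k : x y / x <= y}.
Proof. by move=> x y le_xy; apply: sub_count => j /= /leq_trans; apply. Qed.

Definition block_saturated (k n : nat) (b : nat -> nat) (e : 'I_n -> nat)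
    (q : 'I_n -> Prop) : Prop :=
  forall (x y : 'I_n) (i : 'I_k), in_int b i (e x) -> in_int b i (e y) -> (q x <-> q y).

Lemma intervalicity_saturated k n b (e : 'I_n -> nat) (q : 'I_n -> Prop) :
  bounds k n b -> injective e -> (forall x, e x < n) -> block_saturated k b e q ->
  intervalicity [seq e x | x <- enum 'I_n & toBool (q x)] [seq e x | x <- enum 'I_n] <= k.
Proof.
move=> bb e_inj e_lt q_sat; rewrite intervalicity_runs.
apply: (runs_blocks (f := interval_index b k)).
- exact: (sort_sorted leq_total).
- exact: interval_index_mono.
- move=> v; rewrite mem_sort mem_undup => /mapP[x _ ->].
  exact: interval_index_lt bb (e_lt x).
move=> v w; rewrite !mem_sort !mem_undup => /mapP[x _ ->] /mapP[y _ ->] same_index.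
have [i xi] := interval_exists bb (e_lt x); have [i' yi'] := interval_exists bb (e_lt y).
have i'_eq : i' = i.
  apply: val_inj; rewrite /= -(interval_index_spec bb xi) same_index.
  by rewrite (interval_index_spec bb yi').
rewrite i'_eq in yi'.
by rewrite !(mem_map e_inj) !mem_filter (toBool_eq (q_sat x y i xi yi')) -!enumT !mem_enum.
Qed.

Lemma grid_complexity_size P A : grid_complexity P A <= size P.
Proof.
have := intervalicity_size (map fst A) (map fst P).
have := intervalicity_size (map snd A) (map snd P).
by rewrite /grid_complexity geq_max !size_map => -> ->.
Qed.

Lemma grid_complexity_full P A : {subset P <= A} -> grid_complexity P A <= 1.
Proof.
move=> PA; rewrite /grid_complexity geq_max !intervalicity_full //;
  by move=> v /mapP[p /PA pA ->]; apply: map_f.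
Qed.

Lemma grid_complexity_sub P P1 A : {subset A <= P1} -> {subset P1 <= P} ->
  grid_complexity P A <= grid_complexity P1 A + grid_complexity P P1.
Proof.
move=> AP1 P1P; rewrite /grid_complexity geq_max.
have fst_le := intervalicity_sub (sub_map (f := fst) AP1) (sub_map (f := fst) P1P).
have snd_le := intervalicity_sub (sub_map (f := snd) AP1) (sub_map (f := snd) P1P).
by rewrite (leq_trans fst_le) ?(leq_trans snd_le) // leq_add ?leq_maxl ?leq_maxr.
Qed.

Lemma grid_width_node P a b : grid_width P (Node a b) =
  maxn (grid_complexity P (leaves a ++ leaves b)) (maxn (grid_width P a) (grid_width P b)).
Proof. by []. Qed.

Lemma grid_width_size P t : grid_width P t <= size P.
Proof.
elim: t => [p|a IHa b IHb]; first exact: grid_complexity_size.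
by rewrite grid_width_node geq_max grid_complexity_size geq_max IHa IHb.
Qed.

Lemma grid_width_sub P P1 t : {subset leaves t <= P1} -> {subset P1 <= P} ->
  grid_width P t <= grid_width P1 t + grid_complexity P P1.
Proof.
move=> tP1 P1P; elim: t tP1 => [p|a IHa b IHb] tP1; first exact: grid_complexity_sub.
have aP1 : {subset leaves a <= P1} by move=> v va; apply: tP1; rewrite /= mem_cat va.
have bP1 : {subset leaves b <= P1} by move=> v vb; apply: tP1; rewrite /= mem_cat vb orbT.
have := grid_complexity_sub tP1 P1P; have := IHa aP1; have := IHb bP1.
rewrite !grid_width_node /=; set g := grid_complexity P P1; lia.
Qed.

Fixpoint caterpillar (p : point) (s : seq point) : gtree :=
  if s is q :: s' then Node (Leaf p) (caterpillar q s') else Leaf p.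

Lemma leaves_caterpillar p s : leaves (caterpillar p s) = p :: s.
Proof. by elim: s p => [|q s IH] p //=; rewrite IH. Qed.

Lemma gw_le_size P : gw_le P (size P).
Proof.
case: P => [|p s]; [by left | right].
exists (caterpillar p s); split; last exact: grid_width_size.
by rewrite /grid_tree_of leaves_caterpillar.
Qed.

Lemma gw_le_gw P : gw_le P (gw P).
Proof.
rewrite /gw; apply: big_ind => [|x y|i /toBoolP //]; first exact: gw_le_size.
by rewrite /minn; case: ifP.
Qed.

Lemma gw_size P : gw P <= size P.
Proof.
rewrite /gw; apply: (big_ind (fun v => v <= size P)) => // [x y|i _].
- by rewrite geq_min => ->.
- by rewrite -ltnS.
Qed.

Lemma big_minn_le (I : eqType) (r : seq I) (p : pred I) (F : I -> nat) idx i0 :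
  i0 \in r -> p i0 -> \big[minn/idx]_(i <- r | p i) F i <= F i0.
Proof.
elim: r => [|x r IH] //; rewrite inE big_cons => /orP[/eqP <- -> | i0r pi0].
- exact: geq_minl.
- by case: ifP => _; [apply: leq_trans (geq_minr _ _) (IH i0r pi0) | apply: IH].
Qed.

Lemma gw_min P w : gw_le P w -> gw P <= w.
Proof.
move=> Pw; have [le_w|lt_w] := leqP w (size P); last first.
  exact: leq_trans (gw_size P) (ltnW lt_w).
have lt_w1 : w < (size P).+1 by [].
apply: (@big_minn_le _ _ _ (fun i : 'I_(size P).+1 => nat_of_ord i) _ (Ordinal lt_w1)).
- exact: mem_index_enum.
- exact/toBoolP.
Qed.

Lemma gw_union P P1 P2 K : 0 < K -> perm_eq P (P1 ++ P2) ->
  grid_complexity P P1 <= K -> grid_complexity P P2 <= K ->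
  gw P <= maxn (gw P1) (gw P2) + K.
Proof.
move=> K_pos PP gc1 gc2; set m := maxn (gw P1) (gw P2).
have sub1 : {subset P1 <= P} by move=> v v1; rewrite (perm_mem PP) mem_cat v1.
have sub2 : {subset P2 <= P} by move=> v v2; rewrite (perm_mem PP) mem_cat v2 orbT.
have lift Q t : grid_tree_of Q t -> {subset Q <= P} -> grid_complexity P Q <= K ->
    grid_width Q t <= m -> grid_width P t <= m + K.
  move=> tQ QP gcQ wt; apply: leq_trans (grid_width_sub _ QP) (leq_add wt gcQ).
  by move=> v; rewrite (perm_mem tQ).
case: (gw_le_gw P1) => [P1nil|[t1 [tP1 w1]]]; case: (gw_le_gw P2) => [P2nil|[t2 [tP2 w2]]].
- by apply: leq_trans (gw_size P) _; rewrite (perm_size PP) P1nil P2nil.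
- apply: gw_min; right; exists t2; split.
    by rewrite P1nil in PP; rewrite /grid_tree_of (perm_trans tP2) // perm_sym.
  exact: lift tP2 sub2 gc2 (leq_trans w2 (leq_maxr _ _)).
- apply: gw_min; right; exists t1; split.
    by rewrite P2nil cats0 in PP; rewrite /grid_tree_of (perm_trans tP1) // perm_sym.
  exact: lift tP1 sub1 gc1 (leq_trans w1 (leq_maxl _ _)).
have tP : grid_tree_of P (Node t1 t2).
  by rewrite /grid_tree_of perm_sym (perm_trans PP) // perm_cat // perm_sym.
have root : grid_complexity P (leaves t1 ++ leaves t2) <= m + K.
  apply: leq_trans (grid_complexity_full _) (leq_trans K_pos (leq_addl _ _)).
  by move=> v; rewrite -(perm_mem tP).
apply: gw_min; right; exists (Node t1 t2); split => //.
rewrite grid_width_node geq_max root geq_max /=; apply/andP; split.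
- exact: lift tP1 sub1 gc1 (leq_trans w1 (leq_maxl _ _)).
- exact: lift tP2 sub2 gc2 (leq_trans w2 (leq_maxr _ _)).
Qed.

Lemma line_connected (T : Type) m (V : 'I_m -> Prop) (f : 'I_m -> T) (S : relation T) :
  (forall a b : 'I_m, V a -> V b -> a <> b ->
     (forall c : 'I_m, minn a b < c < maxn a b -> ~ V c) -> S (f a) (f b)) ->
  forall a b, V a -> V b -> clos_refl_trans T S (f a) (f b).
Proof.
move=> S_step a b; have [d] := ubnP (maxn a b - minn a b).
elim: d a b => [|d IH] a b // lt_d Va Vb.
case: (classic (exists c : 'I_m, minn a b < c < maxn a b /\ V c)).
  by move=> [c [/andP[lo hi] Vc]]; apply: (rt_trans _ _ _ (f c)); apply: IH => //; lia.
move=> none.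
case: (eqVneq a b) => [<-|neq_ab]; first exact: rt_refl.
apply: rt_step; apply: S_step => // [/eqP|c c_between Vc]; first by rewrite (negbTE neq_ab).
by apply: none; exists c.
Qed.

Section CellGraph.
Variables (k l : nat) (M : gmatrix k l).

Lemma connected_vertex c0 c : is_vertex M c0 -> cell_connected M c0 c -> is_vertex M c.
Proof.
move=> V0 c0c.
by elim: (clos_rt_rtn1 _ _ _ _ c0c) => // y z [_ [Vz _]].
Qed.

Lemma column_connected (i : 'I_k) (a b : 'I_l) :
  is_vertex M (i, a) -> is_vertex M (i, b) -> cell_connected M (i, a) (i, b).
Proof.
apply: (line_connected (V := fun j => is_vertex M (i, j)) (f := fun j => (i, j))).
move=> a' b' Va Vb neq_ab between; do 3 (split => //); first by case.
by left; split.
Qed.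

Lemma row_connected (j : 'I_l) (a b : 'I_k) :
  is_vertex M (a, j) -> is_vertex M (b, j) -> cell_connected M (a, j) (b, j).
Proof.
apply: (line_connected (V := fun i => is_vertex M (i, j)) (f := fun i => (i, j))).
move=> a' b' Va Vb neq_ab between; do 3 (split => //); first by case.
by right; split.
Qed.

Definition component_col (c0 : cell k l) (i : 'I_k) : Prop :=
  exists j : 'I_l, cell_connected M c0 (i, j).
Definition component_row (c0 : cell k l) (j : 'I_l) : Prop :=
  exists i : 'I_k, cell_connected M c0 (i, j).

Lemma component_col_row c0 (i : 'I_k) (j : 'I_l) : is_vertex M c0 -> is_vertex M (i, j) ->
  component_col c0 i <-> component_row c0 j.
Proof.
move=> V0 Vij; split => [[j' c0ij']|[i' c0i'j]].
- exists i; apply: (rt_trans _ _ _ (i, j') _ c0ij').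
  exact: column_connected (connected_vertex V0 c0ij') Vij.
- exists j; apply: (rt_trans _ _ _ (i', j) _ c0i'j).
  exact: row_connected (connected_vertex V0 c0i'j) Vij.
Qed.

End CellGraph.

Section GriddedPoints.
Variables (k l n : nat) (sigma : 'S_n) (cb rb : nat -> nat).
Hypotheses (cb_bounds : bounds k n cb) (rb_bounds : bounds l n rb).

Definition grid_saturated (q : 'I_n -> Prop) : Prop :=
  block_saturated k cb (fun x => val x) q /\ block_saturated l rb (fun x => val (sigma x)) q.

Lemma grid_saturated_compl (q q' : 'I_n -> Prop) :
  (forall x, q' x <-> ~ q x) -> grid_saturated q -> grid_saturated q'.
Proof.
move=> qq' [col_sat row_sat]; split=> x y i xi yi.
- by have := col_sat x y i xi yi; have := qq' x; have := qq' y; tauto.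
- by have := row_sat x y i xi yi; have := qq' x; have := qq' y; tauto.
Qed.

Lemma sub_points_all :
  sub_points sigma (fun _ => True) = [seq (val x, val (sigma x)) | x <- enum 'I_n].
Proof.
by rewrite /sub_points (eq_filter (a2 := predT)) ?filter_predT // => x; apply/toBoolP.
Qed.

Lemma sub_points_split (q q' : 'I_n -> Prop) : (forall x, q' x <-> ~ q x) ->
  perm_eq (sub_points sigma (fun _ => True)) (sub_points sigma q ++ sub_points sigma q').
Proof.
move=> qq'; rewrite sub_points_all /sub_points -map_cat perm_sym; apply: perm_map.
rewrite (eq_filter (a1 := fun x => toBool (q' x)) (a2 := predC (fun x => toBool (q x)))).
  by apply/permPl; apply: perm_filterC.
move=> x /=; rewrite /toBool.
case: excluded_middle_informative => q'x; case: excluded_middle_informative => qx //=;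
  exfalso; have := qq' x; tauto.
Qed.

Lemma sub_points_complexity (q : 'I_n -> Prop) : grid_saturated q ->
  grid_complexity (sub_points sigma (fun _ => True)) (sub_points sigma q) <= maxn k l.
Proof.
case=> col_sat row_sat; rewrite sub_points_all /sub_points /grid_complexity geq_max.
rewrite -!(map_comp fst) -!(map_comp snd).
apply/andP; split.
- apply: leq_trans (leq_maxl k l).
  exact: (intervalicity_saturated (e := fun x => val x) cb_bounds val_inj (fun x => ltn_ord x)).
- apply: leq_trans (leq_maxr k l).
  have sigma_inj : injective (fun x : 'I_n => val (sigma x)) by move=> x y /val_inj /perm_inj.
  exact: (intervalicity_saturated rb_bounds sigma_inj (fun x => ltn_ord (sigma x))).
Qed.

Lemma in_cell_of_column (x : 'I_n) (i : 'I_k) :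
  in_int cb i x -> exists j : 'I_l, in_cell sigma cb rb x i j.
Proof.
move=> xi; have [j xj] := interval_exists rb_bounds (ltn_ord (sigma x)).
by exists j; apply/andP.
Qed.

Lemma in_cell_of_row (x : 'I_n) (j : 'I_l) :
  in_int rb j (sigma x) -> exists i : 'I_k, in_cell sigma cb rb x i j.
Proof.
by move=> xj; have [i xi] := interval_exists cb_bounds (ltn_ord x); exists i; apply/andP.
Qed.

Lemma exists_in_cell (A : 'I_k -> Prop) (B : 'I_l -> Prop) (x : 'I_n) (i : 'I_k) (j : 'I_l) :
  in_cell sigma cb rb x i j ->
  (exists (i' : 'I_k) (j' : 'I_l), A i' /\ B j' /\ in_cell sigma cb rb x i' j') <-> A i /\ B j.
Proof.
move=> /andP[xi xj]; split => [[i' [j' [Ai' [Bj' /andP[xi' xj']]]]]|[Ai Bj]].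
- by rewrite -(interval_unique cb_bounds xi xi') -(interval_unique rb_bounds xj xj').
- by exists i, j; rewrite /in_cell xi xj.
Qed.

End GriddedPoints.

Section ComponentBlocks.
Variables (k l : nat) (M : gmatrix k l) (c0 : cell k l).
Variables (n : nat) (sigma : 'S_n) (cb rb : nat -> nat).
Hypothesis c0_vertex : is_vertex M c0.
Hypothesis entries : forall i j, infinite_class (M i j) \/ empty_class (M i j).
Hypothesis gridding : is_gridding M sigma cb rb.

Definition on_block (x : 'I_n) : Prop := exists (i : 'I_k) (j : 'I_l),
  component_col M c0 i /\ component_row M c0 j /\ in_cell sigma cb rb x i j.
Definition off_block (x : 'I_n) : Prop := exists (i : 'I_k) (j : 'I_l),
  ~ component_col M c0 i /\ ~ component_row M c0 j /\ in_cell sigma cb rb x i j.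

Lemma point_cell_vertex (x : 'I_n) (i : 'I_k) (j : 'I_l) :
  in_cell sigma cb rb x i j -> is_vertex M (i, j).
Proof.
move=> xij; have [_ [_ cell_class]] := gridding.
case: (entries i j) => // no_pattern; exfalso; apply: (no_pattern _ (cell_class i j _)).
apply/eqP => no_points.
have : val (sigma x) \in [seq val (sigma y) | y <- enum 'I_n & in_cell sigma cb rb y i j].
  by apply: map_f; rewrite mem_filter xij mem_enum.
by rewrite no_points.
Qed.

Lemma on_block_cell (x : 'I_n) (i : 'I_k) (j : 'I_l) : in_cell sigma cb rb x i j ->
  (on_block x <-> component_col M c0 i) /\ (on_block x <-> component_row M c0 j).
Proof.
move=> xij; have [cb_bounds [rb_bounds _]] := gridding.
have := exists_in_cell cb_bounds rb_bounds (component_col M c0) (component_row M c0) xij.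
have := component_col_row c0_vertex (point_cell_vertex xij); rewrite /on_block; tauto.
Qed.

Lemma off_block_compl (x : 'I_n) : off_block x <-> ~ on_block x.
Proof.
have [cb_bounds [rb_bounds _]] := gridding.
have [i xi] := interval_exists cb_bounds (ltn_ord x).
have [j xij] := in_cell_of_column sigma rb_bounds xi.
have := exists_in_cell cb_bounds rb_bounds (fun i => ~ component_col M c0 i)
                       (fun j => ~ component_row M c0 j) xij.
have := on_block_cell xij; have := component_col_row c0_vertex (point_cell_vertex xij).
rewrite /off_block; tauto.
Qed.

Lemma on_block_saturated : grid_saturated k l sigma cb rb on_block.
Proof.
have [cb_bounds [rb_bounds _]] := gridding.
split=> x y i xi yi.
- have [jx xij] := in_cell_of_column sigma rb_bounds xi.
  have [jy yij] := in_cell_of_column sigma rb_bounds yi.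
  by have := on_block_cell xij; have := on_block_cell yij; tauto.
- have [ix xij] := in_cell_of_row cb_bounds xi.
  have [iy yij] := in_cell_of_row cb_bounds yi.
  by have := on_block_cell xij; have := on_block_cell yij; tauto.
Qed.

End ComponentBlocks.

Theorem mainTheorem15 (k l : nat) (M : gmatrix k l)
  (Hclass : forall i j, perm_class (M i j))
  (Hentries : forall i j, infinite_class (M i j) \/ empty_class (M i j))
  (c0 : cell k l) (Hc0 : is_vertex M c0)
  (Hdisc : exists c1, is_vertex M c1 /\ ~ cell_connected M c0 c1)
  (n : nat) (sigma : 'S_n) (cb rb : nat -> nat)
  (Hgrid : is_gridding M sigma cb rb) :
  let comp := fun c => cell_connected M c0 c in
  let C1 := fun i : 'I_k => exists j : 'I_l, comp (i, j) in
  let R1 := fun j : 'I_l => exists i : 'I_k, comp (i, j) in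
  let pi1 := sub_points sigma (fun x => exists (i : 'I_k) (j : 'I_l),
               C1 i /\ R1 j /\ in_cell sigma cb rb x i j) in
  let pi2 := sub_points sigma (fun x => exists (i : 'I_k) (j : 'I_l),
               ~ C1 i /\ ~ R1 j /\ in_cell sigma cb rb x i j) in
  let pi := sub_points sigma (fun _ => True) in
  gw pi <= maxn (gw pi1) (gw pi2) + maxn k l.
Proof.
cbv zeta.
have [cb_bounds [rb_bounds _]] := Hgrid.
have K_pos : 0 < maxn k l.
  by case: c0.1 => i lt_ik; rewrite leq_max (leq_ltn_trans (leq0n i) lt_ik).
have compl := off_block_compl Hc0 Hentries Hgrid.
have sat1 := on_block_saturated Hc0 Hentries Hgrid.
(* pi1 and pi2 are, up to unfolding, the selections [on_block] and [off_block]. *)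
apply: gw_union K_pos _ _ _.
- exact: sub_points_split compl.
- exact (sub_points_complexity cb_bounds rb_bounds sat1).
- exact (sub_points_complexity cb_bounds rb_bounds (grid_saturated_compl compl sat1)).
Qed.
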